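(* Let $d\ge3$, $\beta>0$, $g:\mathbb{R}^d\to\mathbb{R}$ Lipschitz. There are positive constants $C_1,C_2,C_3,C_4$ depending only on $d,\beta,g$ such that for any $\varepsilon>0$, $t\in\mathbb{Z}_{\ge0}$, $x\in\mathbb{Z}^d$, \[ C_1e^{-C_2\varepsilon(|x|+\sqrt t)}\le G_\varepsilon(t,x)\le C_3e^{C_4(\varepsilon|x|+\varepsilon^2t)}. \]
   Context: $\{S_n\}_{n\ge0}$ is simple symmetric random walk on $\mathbb{Z}^d$ started at the origin; $g_\varepsilon(x)=g(\varepsilon x)$ and $G_\varepsilon(t,x)=\mathbb{E}(e^{\beta g_\varepsilon(S_t+x)})$ for $t\in\mathbb{Z}_{\ge0}$, $x\in\mathbb{Z}^d$. *)

From HB Require Import structures.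
From mathcomp Require Import all_boot all_order all_algebra.
From mathcomp Require Import all_classical all_reals all_analysis.
Set Implicit Arguments. Unset Strict Implicit. Unset Printing Implicit Defensive.
Import Order.TTheory GRing.Theory Num.Theory.
Local Open Scope ring_scope.

Definition enorm (R : realType) (d : nat) (v : 'I_d -> R) : R :=
  Num.sqrt (\sum_(i < d) v i ^+ 2).

Definition intvec (R : realType) (d : nat) (x : 'I_d -> int) : 'I_d -> R :=
  fun i => (x i)%:~R.

Definition lipschitz_eucl (R : realType) (d : nat) (g : ('I_d -> R) -> R) : Prop :=
  exists L : R, forall u v : 'I_d -> R, `|g u - g v| <= L * enorm (fun i => u i - v i).

(* A step of simple symmetric random walk on Z^d: a coordinate direction and
   a sign (true = +e_i, false = -e_i); there are 2d steps, each equally likely. *)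
Definition step_int (d : nat) (s : 'I_d * bool) : 'I_d -> int :=
  fun i => if i == s.1 then (if s.2 then 1 else -1) else 0.

Definition walk_pos (d t : nat) (w : {ffun 'I_t -> 'I_d * bool}) : 'I_d -> int :=
  fun i => \sum_(k < t) step_int (w k) i.

(* G_eps(t,x) = E[ exp(beta g(eps (S_t + x))) ], S_t simple symmetric random walk
   from 0: the law of (S_1..S_t) is uniform over the (2d)^t step sequences. *)
Definition Geps (R : realType) (d : nat) (beta : R) (g : ('I_d -> R) -> R)
    (eps : R) (t : nat) (x : 'I_d -> int) : R :=
  \sum_(w : {ffun 'I_t -> 'I_d * bool})
    ((2 * d)%:R ^- t) *
    expR (beta * g (fun i => eps * (intvec R (fun j => walk_pos w j + x j) i))).

From HB Require Import structures.
From mathcomp Require Import all_boot all_order all_algebra.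
From mathcomp Require Import all_classical all_reals all_analysis.
From mathcomp Require Import ring lra.
Import Order.TTheory GRing.Theory Num.Theory.
Local Open Scope ring_scope.
Set Implicit Arguments. Unset Strict Implicit. Unset Printing Implicit Defensive.

(* Let K be a Lipschitz constant of g and a = beta K eps.  Then
   beta g(eps (S_t + x)) stays within a (|S_t| + |x|) of beta g(0), so the
   upper bound reduces to the exponential moment E e^(a|S_t|) <= 2^d e^(2a^2 t):
   bound |v| by its l^1 norm, expand each e^(a|v_i|) <= e^(a v_i) + e^(-a v_i)
   over sign vectors, and use the independence of the steps, each of which
   contributes a factor at most e^(2a^2).  For the lower bound, Jensen's
   inequality gives G >= exp(beta g(0) - a|x| - a E|S_t|), and
   E|S_t| <= (d + 2) sqrt t is the same exponential moment at a = 1/sqrt t,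
   combined with Jensen once more. *)

Section Exponential.
Variable R : realType.

Lemma expR_add_expRN_le (c : R) : expR c + expR (- c) <= 2 * expR (2 * c ^+ 2).
Proof.
have hA := expR_ge1Dx c; have hB := expR_ge1Dx (- c).
have hAB : expR c * expR (- c) = 1 by rewrite -expRD subrr expR0.
have hE := expR_ge1Dx (2 * c ^+ 2).
have hA0 := expR_gt0 c; have hB0 := expR_gt0 (- c).
(* For c^2 <= 1/2 use e^(+-c) (1 -+ c) <= 1 and (1 + 2c^2)(1 - c^2) >= 1;
   otherwise |c| <= 2c^2. *)
have [small|large] := lerP (c ^+ 2) (1 / 2).
- have h1 : (expR c + expR (- c)) * (1 - c ^+ 2) <= 2.
    have : expR c * (1 - c) <= expR c * expR (- c) by apply: ler_wpM2l; lra.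
    have : expR (- c) * (1 + c) <= expR (- c) * expR c by apply: ler_wpM2l; lra.
    have : -1 <= c <= 1 by apply/andP; split; nra.
    nra.
  have h2 : 1 <= expR (2 * c ^+ 2) * (1 - c ^+ 2) by nra.
  have hp : 0 < 1 - c ^+ 2 by lra.
  by rewrite -(ler_pM2r hp); nra.
- have : expR c <= expR (2 * c ^+ 2) by rewrite ler_expR; nra.
  have : expR (- c) <= expR (2 * c ^+ 2) by rewrite ler_expR; nra.
  lra.
Qed.

Lemma expR_abs_le (c : R) : expR `|c| <= expR c + expR (- c).
Proof.
have := expR_gt0 c; have := expR_gt0 (- c).
by case: (ler0P c) => _; lra.
Qed.

(* expR lies above its tangent line at the mean. *)
Lemma jensen_expR (I : finType) (p f : I -> R) :
  (forall i, 0 <= p i) -> \sum_i p i = 1 ->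
  expR (\sum_i p i * f i) <= \sum_i p i * expR (f i).
Proof.
move=> p0 p1; set m := \sum_i p i * f i.
have tangent i : p i * (expR m * (1 + (f i - m))) <= p i * expR (f i).
  apply: ler_wpM2l => //.
  have -> : expR (f i) = expR m * expR (f i - m) by rewrite -expRD subrKC.
  by rewrite ler_wpM2l ?expR_ge1Dx // ltW ?expR_gt0.
apply: le_trans (ler_sum _ (fun i _ => tangent i)).
under eq_bigr do rewrite mulrCA mulrDr mulr1 mulrBr.
rewrite -mulr_sumr big_split /= sumrB p1 -/m -mulr_suml p1 mul1r.
by rewrite subrr addr0 mulr1.
Qed.

End Exponential.

Section EuclideanNorm.
Variables (R : realType) (d : nat).
Implicit Types (u v : 'I_d -> R) (g : ('I_d -> R) -> R).

Lemma enorm_ge0 v : 0 <= enorm v.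
Proof. exact: sqrtr_ge0. Qed.

Lemma enormZ (c : R) v : enorm (fun i => c * v i) = `|c| * enorm v.
Proof.
rewrite /enorm -sqrtr_sqr -sqrtrM ?sqr_ge0 // mulr_sumr.
by congr Num.sqrt; apply: eq_bigr => i _; rewrite exprMn.
Qed.

Lemma enorm_le_sum_abs v : enorm v <= \sum_i `|v i|.
Proof.
set S := \sum_i `|v i|.
have S0 : 0 <= S by apply: sumr_ge0.
rewrite /enorm -(ger0_norm S0) -sqrtr_sqr ler_sqrt ?sqr_ge0 //.
have sqr_le i : v i ^+ 2 <= `|v i| * S.
  rewrite -real_normK ?num_real // expr2 ler_wpM2l //.
  by rewrite /S (bigD1 i) //= lerDl sumr_ge0.
by apply: le_trans (ler_sum _ (fun i _ => sqr_le i)) _; rewrite -mulr_suml.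
Qed.

Lemma lipschitz_euclP g : lipschitz_eucl g ->
  exists2 K : R, 0 < K & forall u v, `|g u - g v| <= K * enorm (fun i => u i - v i).
Proof.
case=> L hL; exists (`|L| + 1) => [|u v]; first by rewrite ltr_pwDr.
apply: le_trans (hL u v) _; rewrite ler_wpM2r ?enorm_ge0 //.
by apply: le_trans (ler_norm L) _; rewrite lerDl.
Qed.

Lemma lipschitz_scaled_sum g (K eps : R) u v :
  (forall u v, `|g u - g v| <= K * enorm (fun i => u i - v i)) -> 0 <= eps ->
  `|g (fun i => eps * (u i + v i)) - g (fun=> 0)| <= K * eps * (enorm u + enorm v).
Proof.
move=> hK eps0.
have h1 := hK (fun i => eps * (u i + v i)) (fun i => eps * v i).
have h2 := hK (fun i => eps * v i) (fun=> 0).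
have e1 : (fun i => eps * (u i + v i) - eps * v i) = (fun i => eps * u i).
  by apply: funext => i; ring.
have e2 : (fun i => eps * v i - 0) = (fun i => eps * v i).
  by apply: funext => i; rewrite subr0.
rewrite e1 in h1; rewrite e2 in h2.
rewrite !enormZ (ger0_norm eps0) in h1 h2.
apply: le_trans (ler_distD (g (fun i => eps * v i)) _ _) _.
have -> : K * eps * (enorm u + enorm v) = K * (eps * enorm u) + K * (eps * enorm v).
  by ring.
exact: lerD.
Qed.

End EuclideanNorm.

Section RandomWalk.
Variables (R : realType) (d : nat).

Definition signb (b : bool) : R := if b then 1 else -1.

Lemma sum_mul_step_int (c : 'I_d -> R) (st : 'I_d * bool) :
  \sum_i c i * (step_int st i)%:~R = c st.1 * signb st.2.
Proof.
rewrite (bigD1 st.1) //= big1 ?addr0; first by rewrite /step_int eqxx; case: st.2.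
by move=> i /negbTE ne; rewrite /step_int ne mulr0.
Qed.

Lemma sum_mul_walk_pos t (c : 'I_d -> R) (w : {ffun 'I_t -> 'I_d * bool}) :
  \sum_i c i * (walk_pos w i)%:~R = \sum_k c (w k).1 * signb (w k).2.
Proof.
under eq_bigr do rewrite /walk_pos mulrz_sumr mulr_sumr.
by rewrite exchange_big; apply: eq_bigr => k _; rewrite sum_mul_step_int.
Qed.

Definition walk_expect t (F : {ffun 'I_t -> 'I_d * bool} -> R) : R :=
  \sum_w (2 * d)%:R ^- t * F w.

Lemma walk_weight_ge0 t : 0 <= (2 * d)%:R ^- t :> R.
Proof. by rewrite invr_ge0 exprn_ge0. Qed.

Lemma ler_walk_expect t (F G : {ffun 'I_t -> 'I_d * bool} -> R) :
  (forall w, F w <= G w) -> walk_expect F <= walk_expect G.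
Proof. by move=> FG; apply: ler_sum => w _; rewrite ler_wpM2l ?walk_weight_ge0. Qed.

Lemma walk_expectZ t (k : R) (F : {ffun 'I_t -> 'I_d * bool} -> R) :
  walk_expect (fun w => k * F w) = k * walk_expect F.
Proof. by rewrite /walk_expect mulr_sumr; apply: eq_bigr => w _; rewrite mulrCA. Qed.

Lemma walk_expectD t (F G : {ffun 'I_t -> 'I_d * bool} -> R) :
  walk_expect (fun w => F w + G w) = walk_expect F + walk_expect G.
Proof. by rewrite /walk_expect -big_split; apply: eq_bigr => w _; rewrite mulrDr. Qed.

Lemma walk_expect_sum t (I : finType) (F : I -> {ffun 'I_t -> 'I_d * bool} -> R) :
  walk_expect (fun w => \sum_s F s w) = \sum_s walk_expect (F s).
Proof. by rewrite /walk_expect exchange_big; apply: eq_bigr => w _; rewrite mulr_sumr. Qed.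

Lemma walk_expect_prod t (f : 'I_d * bool -> R) :
  walk_expect (fun w : {ffun 'I_t -> 'I_d * bool} => \prod_k f (w k)) =
  ((2 * d)%:R ^-1 * \sum_st f st) ^+ t.
Proof.
transitivity (\sum_(w : {ffun 'I_t -> 'I_d * bool}) \prod_k ((2 * d)%:R ^-1 * f (w k))).
  by apply: eq_bigr => w _; rewrite big_split /= prodr_const card_ord exprVn.
rewrite -(bigA_distr_bigA (fun _ st => (2 * d)%:R ^-1 * f st)) /=.
by rewrite prodr_const card_ord mulr_sumr.
Qed.

Hypothesis d_gt0 : (0 < d)%N.

Lemma walk_weight_sum t :
  \sum_(w : {ffun 'I_t -> 'I_d * bool}) (2 * d)%:R ^- t = 1 :> R.
Proof.
rewrite sumr_const card_ffun card_prod card_bool !card_ord.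
rewrite -[_ *+ _]mulr_natr natrX mulnC mulVf //.
by rewrite expf_neq0 // pnatr_eq0 -lt0n muln_gt0 d_gt0.
Qed.

Lemma walk_expect_cst t (c : R) :
  walk_expect (fun _ : {ffun 'I_t -> 'I_d * bool} => c) = c.
Proof. by rewrite /walk_expect -mulr_suml walk_weight_sum mul1r. Qed.

Lemma expR_walk_expect_le t (F : {ffun 'I_t -> 'I_d * bool} -> R) :
  expR (walk_expect F) <= walk_expect (fun w => expR (F w)).
Proof.
apply: (@jensen_expR _ _ (fun _ => (2 * d)%:R ^- t)) => [w|].
  exact: walk_weight_ge0.
exact: walk_weight_sum.
Qed.

End RandomWalk.

Section WalkMoments.
Variables (R : realType) (d : nat).
Local Notation walk_norm w := (enorm (intvec R (walk_pos w))).

Lemma expR_walk_norm_le t (a : R) (w : {ffun 'I_t -> 'I_d * bool}) : 0 <= a ->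
  expR (a * walk_norm w) <=
  \sum_(s : {ffun 'I_d -> bool}) \prod_k expR (a * signb R (s (w k).1) * signb R (w k).2).
Proof.
move=> a0; set v := intvec R (walk_pos w).
apply: (@le_trans _ _ (\prod_i expR (a * `|v i|))).
  by rewrite -expR_sum ler_expR -mulr_sumr ler_wpM2l ?enorm_le_sum_abs.
apply: (@le_trans _ _ (\prod_i \sum_(b : bool) expR (a * signb R b * v i))).
  apply: ler_prod => i _; rewrite ltW ?expR_gt0 //= big_bool /= /signb mulr1 mulrN1 mulNr.
  by have := expR_abs_le (a * v i); rewrite normrM (ger0_norm a0).
rewrite (bigA_distr_bigA (fun i b => expR (a * signb R b * v i))) /=; apply: ler_sum => s _.
by rewrite -!expR_sum /v /intvec (sum_mul_walk_pos (fun i => a * signb R (s i))).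
Qed.

Hypothesis d_gt0 : (0 < d)%N.

Lemma step_expR_le (s : 'I_d -> bool) (a : R) :
  (2 * d)%:R ^-1 * \sum_(st : 'I_d * bool) expR (a * signb R (s st.1) * signb R st.2)
  <= expR (2 * a ^+ 2).
Proof.
have per_direction i :
    \sum_b expR (a * signb R (s i) * signb R b) <= 2 * expR (2 * a ^+ 2).
  rewrite big_bool /signb /=; case: (s i); rewrite !(mulr1, mulrN1, mulNr, opprK).
    exact: expR_add_expRN_le.
  by rewrite addrC; exact: expR_add_expRN_le.
rewrite -(pair_bigA _ (fun i b => expR (a * signb R (s i) * signb R b))) /=.
rewrite -[leRHS](@mulKf _ (2 * d)%:R) ?pnatr_eq0 -?lt0n ?muln_gt0 //.
rewrite ler_wpM2l ?invr_ge0 ?ler0n //.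
apply: le_trans (ler_sum _ (fun i _ => per_direction i)) _.
by rewrite sumr_const card_ord natrM -[_ *+ d]mulr_natr mulrAC.
Qed.

Lemma walk_expect_expR_norm_le t (a : R) : 0 <= a ->
  walk_expect (fun w : {ffun 'I_t -> 'I_d * bool} => expR (a * walk_norm w))
  <= 2 ^+ d * expR (2 * a ^+ 2 * t%:R).
Proof.
move=> a0; apply: le_trans (ler_walk_expect (fun w => expR_walk_norm_le w a0)) _.
rewrite walk_expect_sum.
have per_sign (s : {ffun 'I_d -> bool}) : walk_expect (fun w : {ffun 'I_t -> _} =>
    \prod_k expR (a * signb R (s (w k).1) * signb R (w k).2)) <= expR (2 * a ^+ 2) ^+ t.
  rewrite (walk_expect_prod t (fun st => expR (a * signb R (s st.1) * signb R st.2))).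
  apply: lerXn2r; rewrite ?nnegrE ?expR_ge0 ?step_expR_le //.
  by rewrite mulr_ge0 ?invr_ge0 ?ler0n ?sumr_ge0 // => st _; rewrite expR_ge0.
apply: le_trans (ler_sum _ (fun s _ => per_sign s)) _.
by rewrite sumr_const card_ffun card_bool card_ord -expRM_natr -[_ *+ _]mulr_natl natrX.
Qed.

Lemma walk_norm0 (w : {ffun 'I_0 -> 'I_d * bool}) : walk_norm w = 0.
Proof.
rewrite /enorm big1 ?sqrtr0 // => i _.
by rewrite /intvec /walk_pos big_ord0 expr2 mulr0.
Qed.

Lemma walk_expect_norm_le t :
  walk_expect (fun w : {ffun 'I_t -> 'I_d * bool} => walk_norm w)
  <= d.+2%:R * Num.sqrt t%:R.
Proof.
case: t => [|t].
  by rewrite /walk_expect big1 ?sqrtr0 ?mulr0 // => w _; rewrite walk_norm0 mulr0.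
set s := Num.sqrt t.+1%:R.
have s0 : 0 < s by rewrite sqrtr_gt0 ltr0n.
have inv_s0 : 0 <= s^-1 by rewrite invr_ge0 ltW.
have moment := walk_expect_expR_norm_le t.+1 inv_s0.
have unit_exponent : 2 * s^-1 ^+ 2 * t.+1%:R = 2.
  by rewrite exprVn sqr_sqrtr ?ler0n // -mulrA mulVf ?mulr1 ?pnatr_eq0.
rewrite unit_exponent in moment.
have two_pow_le : 2 ^+ d * expR 2 <= expR d.+2%:R :> R.
  rewrite -[d.+2]addn2 natrD (expRD d%:R) -[d%:R]mulr1 expRM_natl ler_wpM2r ?expR_ge0 //.
  by rewrite lerXn2r ?nnegrE ?expR_ge0 //; have := expR_ge1Dx (1 : R); lra.
have := le_trans (expR_walk_expect_le d_gt0 _) (le_trans moment two_pow_le).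
by rewrite walk_expectZ ler_expR ler_pdivrMl // mulrC.
Qed.

End WalkMoments.

Section GepsBounds.
Variables (R : realType) (d : nat) (beta K : R) (g : ('I_d -> R) -> R).
Hypotheses (d_gt0 : (0 < d)%N) (beta_ge0 : 0 <= beta) (K_ge0 : 0 <= K).
Hypothesis g_lip : forall u v, `|g u - g v| <= K * enorm (fun i => u i - v i).
Local Notation walk_norm w := (enorm (intvec R (walk_pos w))).

Lemma Geps_walk_expect eps t x : Geps beta g eps t x =
  walk_expect (fun w : {ffun 'I_t -> 'I_d * bool} =>
    expR (beta * g (fun i => eps * (intvec R (walk_pos w) i + intvec R x i)))).
Proof.
rewrite /Geps /walk_expect; apply: eq_bigr => w _.
by congr (_ * expR (beta * g _)); apply: funext => i; rewrite /intvec intrD.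
Qed.

Lemma walk_potential_dist eps t x (w : {ffun 'I_t -> 'I_d * bool}) : 0 <= eps ->
  `|beta * g (fun i => eps * (intvec R (walk_pos w) i + intvec R x i))
    - beta * g (fun=> 0)| <= beta * K * eps * (walk_norm w + enorm (intvec R x)).
Proof.
move=> eps0; rewrite -mulrBr normrM ger0_norm // -!mulrA ler_wpM2l // mulrA.
exact: lipschitz_scaled_sum.
Qed.

Lemma Geps_ge eps t x : 0 <= eps ->
  expR (beta * g (fun=> 0) - beta * K * eps *
        (enorm (intvec R x) + d.+2%:R * Num.sqrt t%:R))
  <= Geps beta g eps t x.
Proof.
move=> eps0; set c := beta * g _; set a := beta * K * eps; set nx := enorm _.
have a0 : 0 <= a by rewrite !mulr_ge0.
rewrite Geps_walk_expect.
apply: (@le_trans _ _ (walk_expect (fun w : {ffun 'I_t -> _} =>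
    expR (c - a * nx + (- a) * walk_norm w)))).
  apply: le_trans (expR_walk_expect_le d_gt0 _).
  rewrite ler_expR walk_expectD walk_expect_cst // walk_expectZ.
  have := ler_wpM2l a0 (walk_expect_norm_le R d_gt0 t).
  by rewrite mulrDr; lra.
apply: ler_walk_expect => w; rewrite ler_expR.
have := walk_potential_dist x w eps0; rewrite -/c -/a -/nx ler_norml => /andP[+ _].
by rewrite mulrDr; lra.
Qed.

Lemma Geps_le eps t x : 0 <= eps ->
  Geps beta g eps t x <= 2 ^+ d * expR (beta * g (fun=> 0) +
    beta * K * eps * enorm (intvec R x) + 2 * (beta * K * eps) ^+ 2 * t%:R).
Proof.
move=> eps0; set c := beta * g _; set a := beta * K * eps; set nx := enorm _.
have a0 : 0 <= a by rewrite !mulr_ge0.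
rewrite Geps_walk_expect.
apply: (@le_trans _ _ (walk_expect (fun w : {ffun 'I_t -> _} =>
    expR (c + a * nx) * expR (a * walk_norm w)))).
  apply: ler_walk_expect => w; rewrite -expRD ler_expR.
  have := walk_potential_dist x w eps0; rewrite -/c -/a -/nx ler_norml => /andP[_].
  by rewrite mulrDr; lra.
have -> : 2 ^+ d * expR (c + a * nx + 2 * a ^+ 2 * t%:R) =
    expR (c + a * nx) * (2 ^+ d * expR (2 * a ^+ 2 * t%:R)) by rewrite expRD mulrCA.
by rewrite walk_expectZ ler_wpM2l ?expR_ge0 ?walk_expect_expR_norm_le.
Qed.

End GepsBounds.

Theorem lemma5p4 (R : realType) (d : nat) (beta : R) (g : ('I_d -> R) -> R) :
  (3 <= d)%N -> 0 < beta -> lipschitz_eucl g ->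
  exists C1 C2 C3 C4 : R,
    [/\ 0 < C1, 0 < C2, 0 < C3, 0 < C4 &
      forall (eps : R) (t : nat) (x : 'I_d -> int), 0 < eps ->
        C1 * expR (- (C2 * eps * (enorm (intvec R x) + Num.sqrt t%:R)))
          <= Geps beta g eps t x /\
        Geps beta g eps t x
          <= C3 * expR (C4 * (eps * enorm (intvec R x) + eps ^+ 2 * t%:R))].
Proof.
move=> d_ge3 beta_gt0 /lipschitz_euclP[K K_gt0 g_lip].
have d_gt0 : (0 < d)%N by apply: leq_trans d_ge3.
have [beta_ge0 K_ge0] := (ltW beta_gt0, ltW K_gt0).
set c := beta * g (fun=> 0); set B := beta * K.
have B_gt0 : 0 < B by rewrite mulr_gt0.
exists (expR c), (B * d.+2%:R), (2 ^+ d * expR c), (B + 2 * B ^+ 2).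
split; rewrite ?addr_gt0 ?mulr_gt0 ?expR_gt0 ?exprn_gt0 ?ltr0n //.
move=> eps t x eps_gt0; have eps_ge0 := ltW eps_gt0.
have nx_ge0 := enorm_ge0 (intvec R x).
have d2_ge1 : 1 <= d.+2%:R :> R by rewrite ler1n.
split.
- apply: le_trans (Geps_ge d_gt0 beta_ge0 K_ge0 g_lip t x eps_ge0).
  rewrite -expRD ler_expR -/c -/B lerD2l lerN2.
  have := ler_wpM2l (mulr_ge0 (mulr_ge0 (ltW B_gt0) eps_ge0) nx_ge0) d2_ge1.
  by rewrite mulr1; nra.
- apply: le_trans (Geps_le d_gt0 beta_ge0 K_ge0 g_lip t x eps_ge0) _.
  rewrite -[leRHS]mulrA ler_wpM2l ?exprn_ge0 // -expRD ler_expR -/c -/B.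
  have : 0 <= B ^+ 2 * eps * enorm (intvec R x) by rewrite !mulr_ge0 ?sqr_ge0.
  have : 0 <= B * eps ^+ 2 * t%:R by rewrite !mulr_ge0 ?sqr_ge0 ?ler0n // ltW.
  lra.
Qed.
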